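(* There exists $C>0$ such that the following holds. Let $d,r:\mathbb{N}\to\mathbb{N}$ be functions with $d$ nondecreasing, taking only odd values at least $5$, $d(n)\ge2r(n)+1$, and $r(n)\ge n$, $d(n)-2r(n)\ge n$ for all $n$. Let $\alpha_n=(1\;2\;\cdots\;d(n))$, $\beta_n=(1\;(1+r(n))\;(1+2r(n)))\in\mathrm{Alt}(d(n))$, $\alpha=(\alpha_n)_n,\beta=(\beta_n)_n\in\prod_n\mathrm{Alt}(d(n))$, $S=\{\alpha,\beta\}$ and $G=\langle S\rangle$. Then $\mathcal{L}_G^S(l)\le\exp(Cl^2\log l)$ for all integers $l\ge2$.
   Context: $\mathbb{N}=\{1,2,\dots\}$. $B_S(l)$ is the ball of radius $l$ about $e$ in the word metric of $S$. A local embedding of $A\subseteq G$ into a group $Q$ is an injective map $\psi:A\to Q$ with $\psi(gh)=\psi(g)\psi(h)$ whenever $g,h,gh\in A$. $\mathcal{L}_G^S(l)$ is the minimal order of a finite group admitting a local embedding of $B_S(l)$. *)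

From mathcomp Require Import all_boot all_fingroup.
From Stdlib Require Import Reals.
Set Implicit Arguments. Unset Strict Implicit. Unset Printing Implicit Defensive.

(* Index shift: the paper's index set is N = {1,2,...}; coordinate n : nat
   of our sequences stands for the paper's index n.+1. *)

(* The ambient group prod_{n in N} Sym(d(n)) (containing prod Alt(d(n))). *)
Definition prodP (d : nat -> nat) : Type := forall n : nat, {perm 'I_(d n.+1)}.

Definition mulP (d : nat -> nat) (g h : prodP d) : prodP d := fun n => (g n * h n)%g.
Definition invP (d : nat -> nat) (g : prodP d) : prodP d := fun n => (g n)^-1%g.
Definition oneP (d : nat -> nat) : prodP d := fun n => 1%g.

(* The d-cycle (1 2 ... d), on 'I_d = {0,...,d-1}: i |-> i+1 mod d. *)
Definition alpha_perm (k : nat) : {perm 'I_k} := perm (@ordS_inj k).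

(* The 3-cycle (1 (1+r) (1+2r)), i.e. 0 -> r -> 2r -> 0 on 'I_k
   (identity in the degenerate case 2r >= k, which never occurs under the
   hypotheses of the theorem). *)
Definition beta_perm (k r : nat) : {perm 'I_k} :=
  if @idP (r + r < k) is ReflectT H then
    let o0 : 'I_k := Ordinal (leq_ltn_trans (leq0n (r + r)) H) in
    let or : 'I_k := Ordinal (leq_ltn_trans (leq_addr r r) H) in
    let o2 : 'I_k := Ordinal H in
    (tperm o0 or * tperm o0 o2)%g
  else 1%g.

Definition alpha (d : nat -> nat) : prodP d := fun n => alpha_perm (d n.+1).
Definition beta (d r : nat -> nat) : prodP d := fun n => beta_perm (d n.+1) (r n.+1).

(* Evaluation of a word over S u S^-1: a letter (s, b) is s if b = false, s^-1 if b = true. *)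
Definition eval_word (d : nat -> nat) (w : seq (prodP d * bool)) : prodP d :=
  foldr (fun x acc => mulP (if x.2 then invP x.1 else x.1) acc) (oneP d) w.

Definition ball (d : nat -> nat) (S : seq (prodP d)) (l : nat) (g : prodP d) : Prop :=
  exists w : seq (prodP d * bool),
    size w <= l /\ List.Forall (fun x => List.In x.1 S) w /\ g = eval_word w.

Definition local_embedding (d : nat -> nat) (A : prodP d -> Prop)
    (Q : finGroupType) (psi : prodP d -> Q) : Prop :=
  (forall g h, A g -> A h -> psi g = psi h -> g = h) /\
  (forall g h, A g -> A h -> A (mulP g h) -> psi (mulP g h) = (psi g * psi h)%g).

(* L_G^S(l) <= x : since L_G^S(l) is the minimal order of a finite group
   admitting a local embedding of B_S(l), this holds iff some finite group
   of order <= x admits such a local embedding. *)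
Definition LEF_le (d : nat -> nat) (S : seq (prodP d)) (l : nat) (x : R) : Prop :=
  exists (Q : finGroupType) (psi : prodP d -> Q),
    local_embedding (ball S l) psi /\ (INR #|Q| <= x)%R.

(* Write a coordinate Sym(D) as D = 2R + E: there beta is the 3-cycle on the anchors 0, R, 2R
   and alpha is the translation x |-> x + 1.  Along a word of length at most L, a point near an
   anchor moves according to which of the congruences c R + e = 0 (mod D), |c| <= 2, |e| <= 4L,
   hold, and a point far from all anchors is merely translated by the alpha-exponent of the word.
   None of this changes when R and E are replaced by min(R, T) and min(E, T) with T = 4L + 2, so
   two words of length at most L agree in a coordinate iff they agree in its truncation, and all
   coordinates n >= T truncate to the same one since r and d - 2r grow.  Hence B_S(l) embeds
   locally, through words of length at most 2l, into the symmetric group of T * 3T = O(l^2)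
   points, whose order (O(l^2))! is at most exp(C l^2 log l). *)

From mathcomp Require Import all_boot all_fingroup ssralg ssrnum ssrint intdiv zify.
From Stdlib Require Import Reals Classical ClassicalEpsilon FunctionalExtensionality Lra.
From mathcomp Require Import ring.

Set Implicit Arguments. Unset Strict Implicit. Unset Printing Implicit Defensive.
Import GRing.Theory Num.Theory.

Section Words.
Variables (D R : nat).

Definition gen_perm (b : bool) : {perm 'I_D} :=
  if b then beta_perm D R else alpha_perm D.

(* The letter (b, inv) is beta if b and alpha otherwise, inverted if inv; as in [eval_word],
   the leftmost letter of a word acts first. *)
Definition letter_perm (x : bool * bool) : {perm 'I_D} :=
  if x.2 then (gen_perm x.1)^-1%g else gen_perm x.1.

Definition word_perm (w : seq (bool * bool)) : {perm 'I_D} :=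
  foldr (fun x p => letter_perm x * p)%g 1%g w.

Lemma word_perm_cat u v : word_perm (u ++ v) = (word_perm u * word_perm v)%g.
Proof. by elim: u => [|x u IH] /=; rewrite ?mul1g // IH mulgA. Qed.

Lemma word_perm_cons x w p : word_perm (x :: w) p = word_perm w (letter_perm x p).
Proof. exact: permM. Qed.

End Words.

Section Beta.
Variables (D R : nat).
Hypotheses (R_gt0 : (0 < R)%nat) (RR_lt : (R + R < D)%nat).

Lemma beta_permE (p : 'I_D) : val (beta_perm D R p) =
  if val p == 0 then R else if val p == R then R + R
  else if val p == R + R then 0 else val p.
Proof.
rewrite /beta_perm; destruct (@idP (R + R < D)%nat) as [lt_RRD|] => //=.
rewrite permM !permE /=.
rewrite !(fun_if (@nat_of_ord D)) /= !eqE /= !(fun_if (@nat_of_ord D)) /=.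
case: p => n _ /=; rewrite eqnE.
have [_|n0] := eqVneq n 0; first by repeat case: eqP; lia.
have [_|nR] := eqVneq n R; first by repeat case: eqP; lia.
by have [_|nRR] := eqVneq n (R + R); repeat case: eqP; lia.
Qed.

Lemma anchor_lt j : (j < 3)%nat -> (j * R < D)%nat.
Proof. by case: j => [|[|[|]]] //= _; lia. Qed.

Lemma beta_perm_anchor j (p : 'I_D) : (j < 3)%nat -> val p = (j * R)%nat ->
  val (beta_perm D R p) = (j.+1 %% 3 * R)%nat.
Proof.
rewrite beta_permE => lt_j3 ->.
by case: j lt_j3 => [|[|[|]]] // _; rewrite ?modnn ?modn_small //; repeat case: eqP; lia.
Qed.

Lemma beta_perm_id (p : 'I_D) :
  (forall j, (j < 3)%nat -> val p != (j * R)%nat) -> beta_perm D R p = p.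
Proof.
move=> off; apply: val_inj; rewrite beta_permE.
by move: (off 0%nat) (off 1%nat) (off 2%nat); rewrite /= mul1n mul2n -addnn; repeat case: eqP; lia.
Qed.

Lemma beta_perm3 (p : 'I_D) : beta_perm D R (beta_perm D R (beta_perm D R p)) = p.
Proof.
case: (classic (exists2 j, (j < 3)%nat & val p = (j * R)%nat)) => [[j lt_j3 pj]|off].
  have lt_next k : (k.+1 %% 3 < 3)%nat by rewrite ltn_mod.
  have e1 := beta_perm_anchor lt_j3 pj.
  have e3 := beta_perm_anchor (lt_next _) (beta_perm_anchor (lt_next _) e1).
  by apply: val_inj; rewrite e3 pj; case: j lt_j3 {pj e1 e3} => [|[|[|]]].
have fix_p : beta_perm D R p = p.
  by apply: beta_perm_id => j lt_j3; apply/eqP => pj; apply: off; exists j.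
by rewrite !fix_p.
Qed.

Lemma beta_permV : ((beta_perm D R)^-1 = beta_perm D R * beta_perm D R)%g.
Proof. by apply/permP => p; rewrite permM -{1}(beta_perm3 p) permK. Qed.

End Beta.

Local Open Scope ring_scope.
Local Open Scope int_scope.

Section Positions.
Variable D : nat.
Implicit Types (p q : 'I_D) (z : int).

Definition represents p z : Prop := (p : int) = (z %% D).

Lemma represents_nat p (k : nat) : (k < D)%nat -> represents p k <-> val p = k.
Proof.
move=> lt_kD; rewrite /represents modz_small ?ltz_nat ?lt_kD //.
by split => [[]|->].
Qed.

Lemma represents_val p : represents p p.
Proof. exact/represents_nat. Qed.

Lemma represents_exists z : (0 < D)%nat -> exists p, represents p z.
Proof.
move=> D_gt0; have D_neq0 : D%:Z != 0 by rewrite eqz_nat -lt0n.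
have lt_zD : (`|modz z D| < D)%nat.
  by rewrite -ltz_nat gez0_abs ?modz_ge0 // ltz_pmod.
by exists (Ordinal lt_zD); rewrite /represents /= gez0_abs ?modz_ge0.
Qed.

Lemma represents_eq p q z z' :
  represents p z -> represents q z' -> (p == q) = (D %| z - z').
Proof. by move=> pz qz'; rewrite -val_eqE -eqz_nat pz qz' eqz_mod_dvd. Qed.

Lemma represents_shift p z z' : represents p z -> (D %| z - z') -> represents p z'.
Proof. by rewrite /represents -eqz_mod_dvd => -> /eqP. Qed.

Lemma represents_alpha p z : represents p z -> represents (alpha_perm D p) (z + 1).
Proof. by rewrite /represents permE /= -modz_nat -addn1 PoszD => ->; rewrite modzDml. Qed.

Lemma represents_alphaV p z :
  represents p z -> represents ((alpha_perm D)^-1%g p) (z - 1).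
Proof.
move=> pz; set q := (alpha_perm D)^-1%g p.
have := represents_eq pz (represents_alpha (represents_val q)).
rewrite permKV eqxx => /esym dvd; apply: represents_shift (represents_val q) _.
have -> : q%:Z - (z - 1) = - (z - (q%:Z + 1)) by ring.
by rewrite rpredN.
Qed.

Lemma represents_iff p z z' :
  represents p z -> represents p z' <-> (D %| z - z').
Proof.
move=> pz; split => [pz'|]; last exact: represents_shift.
by rewrite -(represents_eq pz pz') eqxx.
Qed.

End Positions.

(* The points i R + o and j R + o' near the anchors 0, R, 2R of beta coincide modulo D
   iff D divides (i - j) R + (o - o'). *)
Definition same_pattern (D1 R1 D2 R2 B : nat) : Prop :=
  forall c e : int, `|c| <= 2 -> `|e| <= B ->
    (D1 %| c * R1 + e) = (D2 %| c * R2 + e).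

Lemma same_pattern_sym D1 R1 D2 R2 B :
  same_pattern D1 R1 D2 R2 B -> same_pattern D2 R2 D1 R1 B.
Proof. by move=> pat c e c2 eB; rewrite pat. Qed.

Section Pairing.
Variables (D1 R1 D2 R2 : nat).

Definition paired (rho : nat) (p1 : 'I_D1) (p2 : 'I_D2) : Prop :=
  exists i (o : int), [/\ (i < 3)%nat, `|o| <= rho,
    represents p1 (i%:Z * R1 + o) & represents p2 (i%:Z * R2 + o)].

Lemma paired_mono rho rho' p1 p2 :
  (rho <= rho')%nat -> paired rho p1 p2 -> paired rho' p1 p2.
Proof. by move=> le_rho [i [o [lt_i3 le_o p1io p2io]]]; exists i, o; split => //; lia. Qed.

Lemma paired_alpha rho p1 p2 : paired rho p1 p2 ->
  paired rho.+1 (alpha_perm D1 p1) (alpha_perm D2 p2).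
Proof.
move=> [i [o [lt_i3 le_o p1io p2io]]]; exists i, (o + 1); split; try lia.
  by rewrite addrA; apply: represents_alpha.
by rewrite addrA; apply: represents_alpha.
Qed.

Lemma paired_alphaV rho p1 p2 : paired rho p1 p2 ->
  paired rho.+1 ((alpha_perm D1)^-1%g p1) ((alpha_perm D2)^-1%g p2).
Proof.
move=> [i [o [lt_i3 le_o p1io p2io]]]; exists i, (o - 1); split; try lia.
  by rewrite addrA; apply: represents_alphaV.
by rewrite addrA; apply: represents_alphaV.
Qed.

End Pairing.

Section Simulation.
Variables (D1 R1 D2 R2 B : nat).
Hypotheses (R1_gt0 : (0 < R1)%nat) (RR1_lt : (R1 + R1 < D1)%nat).
Hypotheses (R2_gt0 : (0 < R2)%nat) (RR2_lt : (R2 + R2 < D2)%nat).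
Hypothesis pattern : same_pattern D1 R1 D2 R2 (B + B).
Local Notation paired := (@paired D1 R1 D2 R2).

Lemma paired_at_anchor rho j p1 p2 : (j < 3)%nat ->
  val p1 = (j * R1)%nat -> val p2 = (j * R2)%nat -> paired rho p1 p2.
Proof.
move=> lt_j3 p1j p2j; exists j, 0; rewrite !addr0 -!PoszM; split => //.
  exact/represents_nat/p1j/anchor_lt.
exact/represents_nat/p2j/anchor_lt.
Qed.

Lemma paired_anchor_iff rho j p1 p2 : (rho <= B)%nat -> (j < 3)%nat -> paired rho p1 p2 ->
  val p1 = (j * R1)%nat <-> val p2 = (j * R2)%nat.
Proof.
move=> le_rho lt_j3 [i [o [lt_i3 le_o p1io p2io]]].
rewrite -(represents_nat p1 (anchor_lt R1_gt0 RR1_lt lt_j3)).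
rewrite -(represents_nat p2 (anchor_lt R2_gt0 RR2_lt lt_j3)).
rewrite (represents_iff _ p1io) (represents_iff _ p2io) !PoszM.
have shift R : i%:Z * R + o - j%:Z * R = (i%:Z - j%:Z) * R + o by ring.
by rewrite !shift pattern //; lia.
Qed.

Lemma paired_beta rho p1 p2 : (rho <= B)%nat -> paired rho p1 p2 ->
  paired rho (beta_perm D1 R1 p1) (beta_perm D2 R2 p2).
Proof.
move=> le_rho p12.
case: (classic (exists2 j, (j < 3)%nat & val p1 = (j * R1)%nat)) => [[j lt_j3 p1j]|off].
  have p2j := (paired_anchor_iff le_rho lt_j3 p12).1 p1j.
  have lt_next : (j.+1 %% 3 < 3)%nat by rewrite ltn_mod.
  by apply: (paired_at_anchor _ lt_next); apply: beta_perm_anchor.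
rewrite !beta_perm_id // => j lt_j3; apply/eqP => pj; apply: off; exists j => //.
exact/(paired_anchor_iff le_rho lt_j3 p12).
Qed.

Lemma paired_letter x rho p1 p2 : (rho < B)%nat -> paired rho p1 p2 ->
  paired rho.+1 (letter_perm D1 R1 x p1) (letter_perm D2 R2 x p2).
Proof.
move=> lt_rho p12; have le_rho : (rho <= B)%nat by lia.
case: x => [[] []]; rewrite /letter_perm /gen_perm /=.
- rewrite (beta_permV R1_gt0 RR1_lt) (beta_permV R2_gt0 RR2_lt) !permM.
  apply: (paired_mono (leqnSn rho)); do 2!apply: paired_beta => //.
- exact: paired_mono (leqnSn rho) (paired_beta le_rho p12).
- exact: paired_alphaV.
- exact: paired_alpha.
Qed.

Lemma paired_word w rho p1 p2 : (rho + size w <= B)%nat -> paired rho p1 p2 ->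
  paired (rho + size w) (word_perm D1 R1 w p1) (word_perm D2 R2 w p2).
Proof.
elim: w rho p1 p2 => [|x w IH] rho p1 p2 /=; first by rewrite addn0 !perm1.
move=> le_B p12; rewrite !word_perm_cons addnS -addSn.
by apply: IH; [lia | apply: paired_letter => //; lia].
Qed.

Lemma paired_functional rho p1 p2 q2 : (rho <= B)%nat ->
  paired rho p1 p2 -> paired rho p1 q2 -> p2 = q2.
Proof.
move=> le_rho [i [o [lt_i3 le_o p1io p2io]]] [j [o' [lt_j3 le_o' p1jo q2jo]]].
have shift R : i%:Z * R + o - (j%:Z * R + o') = (i%:Z - j%:Z) * R + (o - o') by ring.
have := represents_eq p1io p1jo; rewrite eqxx shift => /esym dvd1.
by apply/eqP; rewrite (represents_eq p2io q2jo) shift -pattern //; lia.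
Qed.

End Simulation.

Lemma dvdz_small_eq0 (D : nat) (x : int) : (D %| x) -> `|x| < D -> x = 0.
Proof. by case/dvdzP => k ->; rewrite normrM => lt; have -> : k = 0 by nia. Qed.

Fixpoint alpha_exponent (w : seq (bool * bool)) : int :=
  if w is x :: w' then (if x.1 then 0 else if x.2 then -1 else 1) + alpha_exponent w'
  else 0.

Lemma alpha_exponent_le w : `|alpha_exponent w| <= size w.
Proof. by elim: w => [|[[] []] w IH] //=; lia. Qed.

Section Far.
Variables (D R : nat).
Hypotheses (R_gt0 : (0 < R)%nat) (RR_lt : (R + R < D)%nat).

Definition near_anchor (rho : nat) (p : 'I_D) : Prop :=
  exists i (o : int), [/\ (i < 3)%nat, `|o| <= rho & represents p (i%:Z * R + o)].

Lemma near_anchor_alpha rho p : near_anchor rho (alpha_perm D p) -> near_anchor rho.+1 p.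
Proof.
move=> [i [o [lt_i3 le_o ap_io]]]; exists i, (o - 1); split; try lia.
have ap := represents_alpha (represents_val p).
move: ap_io; rewrite (represents_iff _ ap) (represents_iff _ (represents_val p)).
by have -> : p%:Z + 1 - (i%:Z * R + o) = p%:Z - (i%:Z * R + (o - 1)) by ring.
Qed.

Lemma near_anchor_alphaV rho p :
  near_anchor rho ((alpha_perm D)^-1%g p) -> near_anchor rho.+1 p.
Proof.
move=> [i [o [lt_i3 le_o ap_io]]]; exists i, (o + 1); split; try lia.
have ap := represents_alphaV (represents_val p).
move: ap_io; rewrite (represents_iff _ ap) (represents_iff _ (represents_val p)).
by have -> : p%:Z - 1 - (i%:Z * R + o) = p%:Z - (i%:Z * R + (o + 1)) by ring.
Qed.

Lemma not_near_anchor_neq rho p : ~ near_anchor rho p ->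
  forall j, (j < 3)%nat -> val p != (j * R)%nat.
Proof.
move=> far j lt_j3; apply/eqP => pj; apply: far; exists j, 0; split => //.
by rewrite addr0 -PoszM; apply/represents_nat/pj/anchor_lt.
Qed.

Lemma word_perm_far w rho p z : (size w <= rho)%nat -> ~ near_anchor rho p ->
  represents p z -> represents (word_perm D R w p) (z + alpha_exponent w).
Proof.
elim: w rho p z => [|x w IH] rho p z /=; first by rewrite addr0 perm1.
move=> le_rho far pz; rewrite word_perm_cons.
have fix_p := beta_perm_id R_gt0 RR_lt (not_near_anchor_neq far).
case: x => [[] []]; rewrite /letter_perm /gen_perm /= ?add0r.
- by rewrite beta_permV // permM !fix_p; apply: (IH rho) => //; lia.
- by rewrite fix_p; apply: (IH rho) => //; lia.
- rewrite addrA; apply: (IH rho.-1); [lia | | exact: represents_alphaV].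
  by move/near_anchor_alphaV; rewrite prednK //; lia.
- rewrite addrA; apply: (IH rho.-1); [lia | | exact: represents_alpha].
  by move/near_anchor_alpha; rewrite prednK //; lia.
Qed.

End Far.

Section Transfer.
Variables (D1 R1 D2 R2 L : nat).
Hypotheses (R1_gt0 : (0 < R1)%nat) (RR1_lt : (R1 + R1 < D1)%nat).
Hypotheses (R2_gt0 : (0 < R2)%nat) (RR2_lt : (R2 + R2 < D2)%nat).
Hypothesis pattern : same_pattern D1 R1 D2 R2 (4 * L).
Hypothesis LL_lt : (L + L < D1)%nat.
Hypothesis far_point : exists z : 'I_D1, ~ near_anchor R1 L z.

(* A point near an anchor is tracked through the pairing with the first coordinate.  A point
   far from the anchors is only translated by the alpha-exponent, and the far point of the
   first coordinate shows that u and v have the same alpha-exponent, since 2L < D1. *)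
Lemma word_perm_transfer u v : (size u <= L)%nat -> (size v <= L)%nat ->
  word_perm D1 R1 u = word_perm D1 R1 v -> word_perm D2 R2 u = word_perm D2 R2 v.
Proof.
move=> le_u le_v uv1; apply/permP => p2.
have pat : same_pattern D1 R1 D2 R2 ((L + L) + (L + L)).
  by rewrite (_ : (L + L + (L + L) = 4 * L)%nat) //; lia.
have pw := paired_word R1_gt0 RR1_lt R2_gt0 RR2_lt pat.
have pf := paired_functional R1_gt0 RR1_lt R2_gt0 RR2_lt pat.
case: (classic (near_anchor R2 L p2)) => [[i [o [lt_i3 le_o p2io]]]|far2].
  have [p1 p1io] := represents_exists (i%:Z * R1 + o) (leq_ltn_trans (leq0n _) RR1_lt).
  have p12 : paired R1 R2 L p1 p2 by exists i, o.
  have image w : (size w <= L)%nat ->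
      paired R1 R2 (L + L) (word_perm D1 R1 w p1) (word_perm D2 R2 w p2).
    move=> le_w; have le_LL := leq_add (leqnn L) le_w.
    exact: paired_mono le_LL (pw _ _ _ _ le_LL p12).
  by apply: pf (leqnn _) (image u le_u) _; rewrite uv1; apply: image.
have [z far1] := far_point.
have far_image w (le_w : (size w <= L)%nat) :=
  word_perm_far R1_gt0 RR1_lt le_w far1 (represents_val z).
have same_exponent : alpha_exponent u = alpha_exponent v.
  have := represents_eq (far_image u le_u) (far_image v le_v).
  rewrite uv1 eqxx opprD addrACA subrr add0r => /esym dvd_uv.
  apply/eqP; rewrite -subr_eq0; apply/eqP/(dvdz_small_eq0 dvd_uv).
  by have := alpha_exponent_le u; have := alpha_exponent_le v; lia.
have far2_image w (le_w : (size w <= L)%nat) :=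
  word_perm_far R2_gt0 RR2_lt le_w far2 (represents_val p2).
apply/eqP; rewrite (represents_eq (far2_image u le_u) (far2_image v le_v)).
by rewrite same_exponent subrr dvdz0.
Qed.

End Transfer.

(* Unless the parameters agree, R or E is at least T > |e|, which forces the quotient k into
   [-1, 1]; each of the 15 resulting linear equations c R + e = k (2R + E) then holds for
   (R, E) iff it holds for (R', E'). *)
Lemma same_pattern_trunc R E R' E' T B :
  minn R T = minn R' T -> minn E T = minn E' T -> (B < T)%nat ->
  same_pattern (R + R + E) R (R' + R' + E') R' B.
Proof.
wlog suff dvd_trunc : R E R' E' / minn R T = minn R' T -> minn E T = minn E' T ->
    (B < T)%nat -> forall c e : int, `|c| <= 2 -> `|e| <= B ->
    (R + R + E %| c * R + e) -> (R' + R' + E' %| c * R' + e).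
  move=> eqR eqE lt_BT c e le_c le_e.
  by apply/idP/idP; apply: dvd_trunc.
move=> eqR eqE lt_BT c e le_c le_e.
have [[<- <-] //|large] : (R = R' /\ E = E') \/ (T <= R /\ T <= R' \/ T <= E /\ T <= E')%nat.
  by lia.
case/dvdzP => k eq_k; apply/dvdzP; exists k.
have le_k : -1 <= k <= 1 by nia.
move: eq_k; have [->|[->|->]] : k = -1 \/ k = 0 \/ k = 1 by lia.
all: have [->|[->|[->|[->|->]]]] : c = -2 \/ c = -1 \/ c = 0 \/ c = 1 \/ c = 2 by lia.
all: lia.
Qed.

(* The witness lies in the middle of a gap longer than 2L + 1 between two anchors. *)
Lemma far_point_exists R E L : (L + L + 1 < R \/ L + L + 1 < E)%nat ->
  exists z : 'I_(R + R + E), ~ near_anchor R L z.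
Proof.
move=> large.
pose zv := if (L + L + 1 < R)%nat then (R + L + 1)%nat else (R + R + L + 1)%nat.
have lt_zv : (zv < R + R + E)%nat by rewrite /zv; case: ifP; lia.
exists (Ordinal lt_zv) => -[i [o [lt_i3 le_o zio]]].
have := represents_eq (represents_val (Ordinal lt_zv)) zio.
rewrite eqxx /= => /esym/dvdz_small_eq0.
by rewrite /zv; case: ifP => ?; case: i lt_i3 {zio} => [|[|[|]]] // _; lia.
Qed.

Lemma word_perm_eq_trunc R E R' E' T L u v :
  (0 < R)%nat -> (0 < E)%nat -> (0 < R')%nat -> (0 < E')%nat ->
  minn R T = minn R' T -> minn E T = minn E' T -> ((4 * L).+1 < T)%nat ->
  (size u <= L)%nat -> (size v <= L)%nat ->
  word_perm (R + R + E) R u = word_perm (R + R + E) R v <->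
  word_perm (R' + R' + E') R' u = word_perm (R' + R' + E') R' v.
Proof.
move=> R_gt0 E_gt0 R'_gt0 E'_gt0 eqR eqE lt_LT le_u le_v.
have [[<- <-] //|large] :
  (R = R' /\ E = E') \/ (T <= R /\ T <= R' \/ T <= E /\ T <= E')%nat by lia.
have pat := same_pattern_trunc eqR eqE (ltnW lt_LT).
have lt_RRE S F : (0 < F)%nat -> (S + S < S + S + F)%nat by lia.
have far S F : (T <= S \/ T <= F)%nat ->
    exists z : 'I_(S + S + F), ~ near_anchor S L z.
  by move=> ?; apply: far_point_exists; lia.
split => eq_uv.
  apply: (word_perm_transfer R_gt0 (lt_RRE _ _ E_gt0) R'_gt0 (lt_RRE _ _ E'_gt0) pat)
    le_u le_v eq_uv; [lia | apply: far; lia].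
apply: (word_perm_transfer R'_gt0 (lt_RRE _ _ E'_gt0) R_gt0 (lt_RRE _ _ E_gt0))
  le_u le_v eq_uv; [exact: same_pattern_sym | lia | apply: far; lia].
Qed.

Local Close Scope int_scope.
Local Close Scope ring_scope.

Section TaggedPerm.
Variables (I : finType) (n : I -> nat).
Local Notation X := {i : I & 'I_(n i)}.

Definition tagged_perm_fun (f : forall i, {perm 'I_(n i)}) (x : X) : X :=
  Tagged (fun i => 'I_(n i)) (f (tag x) (tagged x)).

Lemma tagged_perm_funK f :
  cancel (tagged_perm_fun f) (tagged_perm_fun (fun i => (f i)^-1)%g).
Proof. by case=> i y; rewrite /tagged_perm_fun /= permK. Qed.

Definition tagged_perm f : {perm X} := perm (can_inj (tagged_perm_funK f)).

Lemma tagged_permE f i (y : 'I_(n i)) :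
  tagged_perm f (Tagged (fun i => 'I_(n i)) y) = Tagged (fun i => 'I_(n i)) (f i y).
Proof. by rewrite permE. Qed.

Lemma tagged_permM f g :
  tagged_perm (fun i => f i * g i)%g = (tagged_perm f * tagged_perm g)%g.
Proof. by apply/permP => -[i y]; rewrite permM !tagged_permE permM. Qed.

Lemma tagged_perm_inj f g : tagged_perm f = tagged_perm g -> forall i, f i = g i.
Proof.
move=> fg i; apply/permP => y.
have := congr1 (fun s : {perm X} => s (Tagged (fun i => 'I_(n i)) y)) fg.
by rewrite /= !tagged_permE; apply: eq_from_Tagged.
Qed.

Lemma card_tagged_ord_le c : (forall i, n i <= c) -> #|{: X}| <= #|I| * c.
Proof.
move=> le_c; rewrite card_tagged sumnE big_map big_enum /= -sum_nat_const.
by apply: leq_sum => i _; rewrite card_ord.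
Qed.

End TaggedPerm.

Lemma card_perm_full (X : finType) : #|{: {perm X}}| = #|X|`!.
Proof.
rewrite (eq_card (B := perm_on [set: X])) ?card_perm ?cardsT // => s.
by rewrite inE unfold_in /perm_on /=; apply/esym/subsetP => x; rewrite inE.
Qed.

Section Product.
Variables (d r : nat -> nat).

Definition word_prod (w : seq (bool * bool)) : prodP d :=
  fun n => word_perm (d n.+1) (r n.+1) w.

Lemma word_prod_cat u v : word_prod (u ++ v) = mulP (word_prod u) (word_prod v).
Proof. by apply: functional_extensionality_dep => n; rewrite /word_prod word_perm_cat. Qed.

Lemma ball_word l g : ball [:: alpha d; beta d r] l g ->
  exists2 w, (size w <= l)%nat & g = word_prod w.
Proof.
case=> ws [le_ws [in_S ->]].
elim: ws l le_ws in_S => [|[s inv] ws IH] l le_ws in_S.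
  by exists [::] => //; apply: functional_extensionality_dep.
case: l le_ws => // l le_ws; case/List.Forall_cons_iff: in_S => /= s_in_S ws_in_S.
have {le_ws ws_in_S} [w le_w ws_w] := IH l le_ws ws_in_S.
have [b ->] : exists b, s = if b then beta d r else alpha d.
  by case: s_in_S => [<-|[<-|[]]]; [exists false | exists true].
exists ((b, inv) :: w) => //; apply: functional_extensionality_dep => n.
by rewrite /= ws_w /word_prod /mulP /=; case: b; case: inv.
Qed.

Variable T : nat.

Definition trunc_R (m : nat) : nat := minn (r m.+1) T.
Definition trunc_E (m : nat) : nat := minn (d m.+1 - (r m.+1 + r m.+1)) T.
Definition trunc_D (m : nat) : nat := trunc_R m + trunc_R m + trunc_E m.

Definition trunc_word_perm (w : seq (bool * bool)) :
    {perm {m : 'I_T & 'I_(trunc_D m)}} :=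
  tagged_perm (fun m : 'I_T => word_perm (trunc_D m) (trunc_R m) w).

Lemma trunc_word_perm_cat u v :
  trunc_word_perm (u ++ v) = (trunc_word_perm u * trunc_word_perm v)%g.
Proof.
rewrite /trunc_word_perm -tagged_permM; congr tagged_perm.
by apply: functional_extensionality_dep => m; rewrite word_perm_cat.
Qed.

Lemma card_trunc : (#|{: {m : 'I_T & 'I_(trunc_D m)}}| <= T * (3 * T))%nat.
Proof.
rewrite -[X in (_ <= X * _)%nat]card_ord; apply: card_tagged_ord_le => m.
by rewrite /trunc_D /trunc_R /trunc_E; lia.
Qed.

Hypothesis coord_ok : forall n, (0 < r n.+1)%nat /\ (r n.+1 + r n.+1 < d n.+1)%nat.
Hypothesis coord_large : forall n, (T <= n.+1)%nat ->
  (T <= r n.+1)%nat /\ (T <= d n.+1 - (r n.+1 + r n.+1))%nat.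

(* Every coordinate n >= T truncates to the same parameters (T, T) as the last block T - 1. *)
Lemma word_prod_eq_trunc L u v : ((4 * L).+1 < T)%nat ->
  (size u <= L)%nat -> (size v <= L)%nat ->
  word_prod u = word_prod v <-> trunc_word_perm u = trunc_word_perm v.
Proof.
move=> lt_LT le_u le_v.
have coord n m : trunc_R n = trunc_R m -> trunc_E n = trunc_E m ->
    word_perm (d n.+1) (r n.+1) u = word_perm (d n.+1) (r n.+1) v <->
    word_perm (trunc_D m) (trunc_R m) u = word_perm (trunc_D m) (trunc_R m) v.
  have [[rn_gt0 rrn_lt] [rm_gt0 rrm_lt]] := (coord_ok n, coord_ok m).
  have -> : d n.+1 = (r n.+1 + r n.+1 + (d n.+1 - (r n.+1 + r n.+1)))%nat by lia.
  move=> eqR eqE; have T_gt0 : (0 < T)%nat by lia.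
  by apply: word_perm_eq_trunc lt_LT le_u le_v; rewrite /trunc_R /trunc_E in eqR eqE *; lia.
split => [uv|/tagged_perm_inj uv].
  rewrite /trunc_word_perm; congr tagged_perm; apply: functional_extensionality_dep => m.
  by apply/(coord m m) => //; move: uv => /(congr1 (fun g : prodP d => g m)).
apply: functional_extensionality_dep => n; rewrite /word_prod.
have [lt_nT|le_Tn] := ltnP n T; first by apply/(coord n (Ordinal lt_nT)) => //; apply: uv.
have lt_T1 : (T.-1 < T)%nat by lia.
have [large_n large_T] := (coord_large (leqW le_Tn), @coord_large T.-1 ltac:(lia)).
apply/(coord n (Ordinal lt_T1)); last exact: uv.
  by rewrite /trunc_R /=; lia.
by rewrite /trunc_E /=; lia.
Qed.

End Product.

Lemma ball_local_embedding d r T l :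
  (forall n, 0 < r n.+1 /\ r n.+1 + r n.+1 < d n.+1)%nat ->
  (forall n, T <= n.+1 -> T <= r n.+1 /\ T <= d n.+1 - (r n.+1 + r n.+1))%nat ->
  ((8 * l).+1 < T)%nat ->
  exists psi : prodP d -> {perm {m : 'I_T & 'I_(trunc_D d r T m)}},
    local_embedding (ball [:: alpha d; beta d r] l) psi.
Proof.
move=> coord_ok coord_large lt_lT.
pose spells g w := (size w <= l)%nat /\ g = word_prod d r w.
pose word_of g := epsilon (inhabits [::]) (spells g).
have word_ofP g : ball [:: alpha d; beta d r] l g -> spells g (word_of g).
  by case/ball_word => w le_w g_w; apply: epsilon_spec; exists w.
have eq_trunc u v : (size u <= l + l)%nat -> (size v <= l + l)%nat ->
    word_prod d r u = word_prod d r v <-> trunc_word_perm d r T u = trunc_word_perm d r T v.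
  by move=> le_u le_v; apply: (word_prod_eq_trunc coord_ok coord_large) le_u le_v; lia.
exists (fun g => trunc_word_perm d r T (word_of g)); split.
  move=> g h /word_ofP[le_g g_w] /word_ofP[le_h h_w] /eq_trunc gh.
  by rewrite g_w h_w; apply: gh; lia.
move=> g h /word_ofP[le_g g_w] /word_ofP[le_h h_w] /word_ofP[le_gh gh_w].
rewrite -trunc_word_perm_cat; apply/eq_trunc; rewrite ?size_cat; try lia.
by rewrite -gh_w word_prod_cat -g_w -h_w.
Qed.

Lemma fact_le_expn n : (n`! <= expn n n)%nat.
Proof.
elim: n => [|n IH] //; rewrite factS expnS leq_mul2l; apply/orP; right.
by apply: leq_trans IH _; case: n => // n; rewrite leq_exp2r.
Qed.

Lemma fact_le_expn_sq l N : (2 <= l)%nat -> (N <= 243 * expn l 2)%nat ->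
  (N`! <= expn l (2673 * expn l 2))%nat.
Proof.
move=> le_2l le_N; set M := (243 * expn l 2)%nat.
have le_M : (M <= expn l 11)%nat.
  rewrite /M (_ : 11 = 9 + 2)%nat // expnD leq_mul2r; apply/orP; right.
  by apply: (@leq_trans (expn 2 9)); rewrite ?leq_exp2r.
apply: leq_trans (leq_fact le_N) _; apply: leq_trans (fact_le_expn M) _.
have M_gt0 : (0 < M)%nat by rewrite /M muln_gt0 expn_gt0; lia.
apply: leq_trans (_ : expn M M <= expn (expn l 11) M)%nat _; first by rewrite leq_exp2r.
by rewrite -expnM /M mulnA.
Qed.

Lemma INR_expn a b : INR (expn a b) = (INR a ^ b)%R.
Proof. by elim: b => [|b IH] //; rewrite expnS -multE mult_INR IH. Qed.

Lemma exp_INR_ln (l K : nat) : (0 < l)%nat -> exp (INR K * ln (INR l)) = INR (expn l K).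
Proof. by move=> l_gt0; rewrite INR_expn -Rpower_pow //; apply: lt_0_INR; lia. Qed.

Lemma INR_fact_le (l N : nat) : (2 <= l)%nat -> (N <= 243 * expn l 2)%nat ->
  (INR N`! <= exp (2673 * INR l ^ 2 * ln (INR l)))%R.
Proof.
move=> le_2l le_N.
have -> : (2673 * INR l ^ 2 = INR (2673 * expn l 2))%R.
  by rewrite -multE mult_INR INR_expn (INR_IZR_INZ 2673).
by rewrite exp_INR_ln; [apply: le_INR; have := fact_le_expn_sq le_2l le_N; lia | lia].
Qed.

Theorem proposition3p11 :
  exists C : R, (0 < C)%R /\
  forall d r : nat -> nat,
    (forall m n, 1 <= m -> m <= n -> d m <= d n) ->
    (forall n, 1 <= n -> odd (d n) /\ 5 <= d n) ->
    (forall n, 1 <= n -> 2 * r n + 1 <= d n) ->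
    (forall n, 1 <= n -> n <= r n) ->
    (forall n, 1 <= n -> n <= d n - 2 * r n) ->
    forall l : nat, 2 <= l ->
      LEF_le [:: alpha d; beta d r] l
        (exp (C * (INR l) ^ 2 * ln (INR l)))%R.
Proof.
exists 2673%R; split; first lra.
move=> d r _ _ _ r_ge gap_ge l le_2l.
pose T := (8 * l).+2.
have coord_ok n : (0 < r n.+1 /\ r n.+1 + r n.+1 < d n.+1)%nat.
  by have := r_ge n.+1 isT; have := gap_ge n.+1 isT; lia.
have coord_large n : (T <= n.+1 -> T <= r n.+1 /\ T <= d n.+1 - (r n.+1 + r n.+1))%nat.
  by have := r_ge n.+1 isT; have := gap_ge n.+1 isT; lia.
have [psi emb] := ball_local_embedding coord_ok coord_large (ltnSn _).
exists _, psi; split => //; rewrite card_perm_full; apply: INR_fact_le => //.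
by apply: leq_trans (card_trunc d r T) _; rewrite /T; nia.
Qed.
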